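(* Let $F:\mathbb{R}\to\mathbb{R}$ be a real function whose graph, as a subspace of $\mathbb{R}^2$, is connected and completely metrizable. Let $S$ be the set of all $x\in\mathbb{R}$ at which $F$ is not continuous. Then $S$ is a meager subset of $\mathbb{R}$.
   Context: A real function is identified with its graph $\{(x,F(x)):x\in\mathbb{R}\}\subset\mathbb{R}^2$ with the subspace topology of the Euclidean plane. *)

From HB Require Import structures.
From mathcomp Require Import all_boot all_order all_algebra.
From mathcomp Require Import all_classical all_reals all_analysis.
Set Implicit Arguments. Unset Strict Implicit. Unset Printing Implicit Defensive.
Import Order.TTheory GRing.Theory Num.Theory.
Import numFieldNormedType.Exports.
Local Open Scope classical_set_scope.
Local Open Scope ring_scope.

Definition graph {R : realType} (F : R -> R) : set (R * R) :=
  [set p | p.2 = F p.1].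

Definition completely_metrizable {R : realType} {T : topologicalType}
  (A : set T) : Prop :=
  exists d : T -> T -> R,
    (forall x y, A x -> A y -> 0 <= d x y) /\
        (forall x y, A x -> A y -> (d x y = 0 <-> x = y)) /\
        (forall x y, A x -> A y -> d x y = d y x) /\
        (forall x y z, A x -> A y -> A z -> d x z <= d x y + d y z) /\
        (* the metric topology on A coincides with the subspace topology *)
        (forall V : set T,
           ((exists2 U : set T, open U & V = A `&` U) <->
           (V `<=` A /\ forall x, V x ->
              exists2 e : R, 0 < e & forall y, A y -> d x y < e -> V y))) /\
        (forall u : nat -> T, (forall n, A (u n)) ->
           (forall e : R, 0 < e -> exists N : nat, forall m n : nat,
              (N <= m)%N -> (N <= n)%N -> d (u m) (u n) < e) ->
           (exists2 l, A l & forall e : R, 0 < e -> exists N : nat,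
              forall n : nat, (N <= n)%N -> d (u n) l < e)).

Definition nowhere_dense {T : topologicalType} (A : set T) : Prop :=
  interior (closure A) = set0.

Definition meager {T : topologicalType} (S : set T) : Prop :=
  exists N : nat -> set T, (forall n, nowhere_dense (N n)) /\
    S `<=` \bigcup_n N n.

(* The discontinuity set of F is the union of the closed sets osc_ge F (1/(k+1))
   where F oscillates by at least 1/(k+1), so it suffices that each of them has
   empty interior.  Connectedness of the graph gives F the intermediate value
   property; hence above every point where F oscillates by e, the closure of the
   graph contains a vertical segment of length e/2.  If such points filled an
   interval, the Baire category theorem on R would give a rectangle inside the
   closure of the graph, and in particular two squares of radius r, one above the
   other at distance more than 2r.  Complete metrizability excludes this:
   choosing graph points alternately in ever smaller subsquares of the two
   squares, with d-diameters tending to 0, produces two limit points of the graph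
   with the same abscissa but different ordinates. *)

From HB Require Import structures.
From mathcomp Require Import all_boot all_order all_algebra.
From mathcomp Require Import all_classical all_reals all_analysis.
From mathcomp Require Import lra zify.
Import Order.TTheory GRing.Theory Num.Theory.
Import numFieldNormedType.Exports.
Local Open Scope classical_set_scope.
Local Open Scope ring_scope.

Lemma dependent_choice {T : Type} (P : T -> Prop) (Q : nat -> T -> T -> Prop)
    (x0 : T) :
  P x0 -> (forall n x, P x -> exists2 y, P y & Q n x y) ->
  exists u : nat -> T, u 0%N = x0 /\ forall n, Q n (u n) (u n.+1).
Proof.
move=> Px0 next.
have /choice[f Pf] : forall nx : nat * T, exists y, P nx.2 -> P y /\ Q nx.1 nx.2 y.
  case=> n x; have [Px|nPx] := pselect (P x); last by exists x => /nPx.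
  by have [y Py Qy] := next n x Px; exists y.
pose fix u n := if n is m.+1 then f (m, u m) else x0.
have Pu n : P (u n) by elim: n => [|n IH] //; exact: (Pf (n, u n) IH).1.
by exists u; split => // n; exact: (Pf (n, u n) (Pu n)).2.
Qed.

Lemma subset_nonincreasing {T : Type} (S : nat -> set T) :
  (forall n, S n.+1 `<=` S n) -> forall n m, (n <= m)%N -> S m `<=` S n.
Proof.
move=> Sdec n m.
apply: (homo_leq (r := fun A B => B `<=` A)) => //.
- by move=> A; exact: subset_refl.
- by move=> A B C BA CB; exact: subset_trans CB BA.
Qed.

Lemma invSn_lt {R : archiRealFieldType} {e : R} :
  0 < e -> exists N : nat, N.+1%:R^-1 < e.
Proof.
move=> e0; exists (Num.truncn e^-1).
by rewrite -ltf_pV2 ?(posrE, invr_gt0)// invrK truncnS_gt.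
Qed.

Lemma ball_prodP {R : realType} (p q : R * R) e :
  ball p e q <-> `|p.1 - q.1| < e /\ `|p.2 - q.2| < e.
Proof. by rewrite /ball /= /prod_ball -!ball_normE. Qed.

Lemma open_disjoint_separated {T : topologicalType} {A B : set T} :
  open A -> open B -> A `&` B = set0 -> separated A B.
Proof.
move=> oA oB AB0; split; apply/seteqP; split => // x [].
- move=> /(_ B (open_nbhs_nbhs _)) + Bx => /(_ (conj oB Bx))[y]; by rewrite AB0.
- move=> Ax /(_ A (open_nbhs_nbhs _)) => /(_ (conj oA Ax))[y]; by rewrite setIC AB0.
Qed.

Lemma open_common_ball {R : realType} {T : pseudoMetricType R} {p q : T}
    {U V : set T} {e : R} :
  open U -> open V -> U p -> V q -> 0 < e ->
  exists2 s, 0 < s & [/\ s <= e, ball p s `<=` U & ball q s `<=` V].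
Proof.
move=> oU oV Up Vq e0.
have /nbhs_ballP[a a0 pU] : nbhs p U by exact: open_nbhs_nbhs.
have /nbhs_ballP[b b0 qV] : nbhs q V by exact: open_nbhs_nbhs.
exists (Num.min e (Num.min a b)); first by rewrite !lt_min e0 a0 b0.
split; first by rewrite ge_min lexx.
- by apply: subset_trans pU; apply: le_ball; rewrite !ge_min lexx !orbT.
- by apply: subset_trans qV; apply: le_ball; rewrite !ge_min lexx !orbT.
Qed.

Lemma closed_vertical_section {R : realType} (A : set (R * R)) (I : set R) :
  closed A -> closed [set y | forall u, I u -> A (y, u)].
Proof.
move=> cA.
have -> : [set y | forall u, I u -> A (y, u)] =
    \bigcap_(u in I) ((fun y => (y, u)) @^-1` A) by apply/seteqP; split => y.
apply: closed_bigI => u _; apply: preimage_closed => // y _.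
exact: (cvg_pair cvg_id (cvg_cst u)).
Qed.

Lemma Baire_closed_cover {K : realType} {U : completeNormedModType K}
    (A : nat -> set U) (V : set U) :
  (forall n, closed (A n)) -> open V -> V !=set0 -> V `<=` \bigcup_n A n ->
  exists n, interior (A n) !=set0.
Proof.
move=> cA oV V0 VA; apply: contrapT => /forallNP nA.
have dense_compl n : open (~` A n) /\ dense (~` A n).
  split; first by rewrite openC.
  move=> O O0 oO; apply: contrapT => /set0P/negP/negPn/eqP OA0.
  apply: (nA n); case: O0 => x Ox; exists x.
  apply: filterS (open_nbhs_nbhs (conj oO Ox)) => y Oy; apply: contrapT => nAy.
  by have : (O `&` ~` A n) y by []; rewrite OA0.
have [x [Vx /= Ax]] := Baire dense_compl V0 oV.
by have [n _] := VA x Vx; apply: Ax.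
Qed.

Section graph.
Context {R : realType} (F : R -> R).
Local Notation G := (graph F).

Definition osc_ge (e : R) : set R :=
  [set x | forall dl, 0 < dl -> exists y z,
    [/\ `|y - x| < dl, `|z - x| < dl & e <= `|F y - F z|]].

Lemma closed_osc_ge e : closed (osc_ge e).
Proof.
move=> x clx dl dl0.
have [y [Ey]] := clx _ (nbhsx_ballx x (dl / 2) ltac:(lra)).
rewrite -ball_normE /= => /ltr_normlP[? ?].
have [y1 [z1 [/ltr_normlP[? ?] /ltr_normlP[? ?] Fyz]]] := Ey (dl / 2) ltac:(lra).
by exists y1, z1; split => //; apply/ltr_normlP; split; lra.
Qed.

Lemma not_continuous_osc_ge x :
  ~ {for x, continuous F} -> exists k : nat, osc_ge k.+1%:R^-1 x.
Proof.
move=> ncont; apply: contrapT => /forallNP nosc; apply: ncont.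
apply/cvgrPdist_lt => e e0; have [k ke] := invSn_lt e0.
have /existsNP[dl /not_implyP[dl0 /forallNP far]] := nosc k.
apply/nbhs_ballP; exists dl => // y /= xy.
rewrite ltNge; apply/negP => Fxy; apply: (far y); exists x.
split; [by rewrite distrC | by rewrite subrr normr0 |].
by rewrite distrC (le_trans _ Fxy) // ltW.
Qed.

Lemma closure_graphP p :
  closure G p <-> forall e, 0 < e -> exists x, ball p e (x, F x).
Proof.
split => [clp e e0 | near B /nbhs_ballP[e e0 peB]].
- by have [[x y] [/= yFx pxy]] := clp _ (nbhsx_ballx p e e0); exists x; rewrite -yFx.
- by have [x px] := near e e0; exists (x, F x); split => //; exact: peB.
Qed.

Hypothesis Fconn : connected G.

Lemma connected_graph_avoid {P Q : set R} {a b : R} : a <= b -> open P -> open Q ->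
  P `&` Q = set0 -> P (F a) -> Q (F b) ->
  exists2 s, a <= s <= b & ~ P (F s) /\ ~ Q (F s).
Proof.
move=> ab oP oQ PQ0 Pa Qb; apply: contrapT => /forall2NP cover.
have PQ t : P t -> Q t -> False by move=> Pt Qt; have : (P `&` Q) t by []; rewrite PQ0.
have {}cover s : a <= s <= b -> P (F s) \/ Q (F s).
  move=> sab; have [//|/not_andP] := cover s.
  by move=> [/contrapT|/contrapT]; [left|right].
have lt_ab : a < b.
  by rewrite lt_neqAle ab andbT; apply/eqP => eab; apply: (PQ (F a)); rewrite // eab.
have open_fst (A : set R) : open A -> open (fst @^-1` A : set (R * R)).
  by apply: open_comp => p _; exact: cvg_fst.
have open_snd (A : set R) : open A -> open (snd @^-1` A : set (R * R)).
  by apply: open_comp => p _; exact: cvg_snd.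
pose W1 := [set p : R * R | p.1 < a \/ p.1 < b /\ P p.2].
pose W2 := [set p : R * R | b < p.1 \/ a < p.1 /\ Q p.2].
have oW1 : open W1.
  apply: openU; first exact: (open_fst _ (@open_lt _ a)).
  by apply: openI; [exact: (open_fst _ (@open_lt _ b)) | exact: open_snd].
have oW2 : open W2.
  apply: openU; first exact: (open_fst _ (@open_gt _ b)).
  by apply: openI; [exact: (open_fst _ (@open_gt _ a)) | exact: open_snd].
have W12 : W1 `&` W2 = set0.
  apply/seteqP; split => // -[x y] [/= [xa|[xb Py]] [bx|[ax Qy]]]; try lra.
  exact: PQ Py Qy.
have GW : G `<=` W1 `|` W2.
  move=> [x y]; rewrite /graph /W1 /W2 /= => ->.
  have [xa|ax] := ltP x a; first by left; left.
  have [bx|xb] := ltP b x; first by right; left.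
  have [Px|Qx] := cover x ltac:(by rewrite ax xb).
  - left; right; split => //; rewrite lt_neqAle xb andbT.
    by apply/eqP => xb'; apply: (PQ (F x)); rewrite // xb'.
  - right; right; split => //; rewrite lt_neqAle ax andbT.
    by apply/eqP => ax'; apply: (PQ (F x)); rewrite // -ax'.
have [GW1|GW2] := connected_subset (open_disjoint_separated oW1 oW2 W12) GW Fconn.
- by have [/=|[/=]] := GW1 (b, F b) erefl; lra.
- by have [/=|[/=]] := GW2 (a, F a) erefl; lra.
Qed.

Lemma connected_graph_IVT {a b u : R} : a <= b ->
  (F a <= u <= F b) \/ (F b <= u <= F a) -> exists2 s, a <= s <= b & F s = u.
Proof.
move=> ab hu.
have [Fau|Fau] := eqVneq (F a) u; first by exists a; rewrite ?lexx ?ab.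
have [Fbu|Fbu] := eqVneq (F b) u; first by exists b; rewrite ?lexx ?ab.
have lt_gt0 : [set t | t < u] `&` [set t | u < t] = set0.
  by apply/seteqP; split => // t /= [? ?]; lra.
have gt_lt0 : [set t | u < t] `&` [set t | t < u] = set0 by rewrite setIC.
have eq_u t : ~ t < u -> ~ u < t -> t = u.
  by move=> /negP; rewrite -leNgt => ut /negP; rewrite -leNgt => tu; apply/le_anti/andP.
case: hu => /andP[au ub].
- have Fa_lt : F a < u by rewrite lt_neqAle Fau.
  have Fb_gt : u < F b by rewrite lt_neqAle eq_sym Fbu.
  have [s sab [? ?]] := connected_graph_avoid ab (@open_lt _ u) (@open_gt _ u)
    lt_gt0 Fa_lt Fb_gt.
  by exists s => //; exact: eq_u.
- have Fa_gt : u < F a by rewrite lt_neqAle eq_sym Fau.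
  have Fb_lt : F b < u by rewrite lt_neqAle Fbu.
  have [s sab [? ?]] := connected_graph_avoid ab (@open_gt _ u) (@open_lt _ u)
    gt_lt0 Fa_gt Fb_lt.
  by exists s => //; exact: eq_u.
Qed.

Lemma connected_graph_IVT_dist {x y u : R} : (F x <= u <= F y) \/ (F y <= u <= F x) ->
  exists2 s, `|s - x| <= `|y - x| & F s = u.
Proof.
move=> hu; have [xy|yx] := leP x y.
- have [s /andP[xs sy] Fs] := connected_graph_IVT xy hu.
  by exists s => //; rewrite !ger0_norm ?subr_ge0 // lerD2r.
- have uyx : (F y <= u <= F x) \/ (F x <= u <= F y) by case: hu; [right|left].
  have [s /andP[ys sx] Fs] := connected_graph_IVT (ltW yx) uyx.
  by exists s => //; rewrite !ler0_norm ?subr_le0 ?(ltW yx) // lerN2 lerD2r.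
Qed.

Lemma osc_ge_closure_segment e z : osc_ge e z ->
  exists t, forall u, t <= u <= t + e / 2 -> closure G (z, u).
Proof.
move=> zE.
pose reach dl u := exists2 x, `|x - z| < dl & F x = u.
have reach_le dl dl' u : dl <= dl' -> reach dl u -> reach dl' u.
  by move=> dl_le [x xz Fx]; exists x => //; exact: lt_le_trans dl_le.
have reach_closure u : (forall dl, 0 < dl -> reach dl u) -> closure G (z, u).
  move=> zu; apply/closure_graphP => dl dl0; have [x xz Fx] := zu dl dl0.
  by exists x; apply/ball_prodP; rewrite distrC Fx subrr normr0.
pose up dl := forall u, F z <= u <= F z + e / 2 -> reach dl u.
pose down dl := forall u, F z - e / 2 <= u <= F z -> reach dl u.
have up_or_down dl : 0 < dl -> up dl \/ down dl.
  move=> dl0; have [y [w [yz wz Fyw]]] := zE dl dl0.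
  have [v vz Fvz] : exists2 v, `|v - z| < dl & e / 2 <= `|F v - F z|.
    have [Fy|Fy] := lerP (e / 2) `|F y - F z|; first by exists y.
    have [Fw|Fw] := lerP (e / 2) `|F w - F z|; first by exists w.
    move: Fy Fw Fyw => /ltr_normlP[? ?] /ltr_normlP[? ?].
    by rewrite ler_normr => /orP[]; lra.
  have reach_between u : (F z <= u <= F v) \/ (F v <= u <= F z) -> reach dl u.
    by move=> /connected_graph_IVT_dist[s sz Fs]; exists s; first exact: le_lt_trans vz.
  move: Fvz; rewrite ler_normr => /orP[Fv|Fv]; [left|right] => u /andP[? ?];
    apply: reach_between; [left|right]; apply/andP; split; lra.
(* [up] is monotone in [dl]: once it fails, [down] holds at all smaller scales *)
have [allup|] := pselect (forall dl, 0 < dl -> up dl).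
  by exists (F z) => u zu; apply: reach_closure => dl dl0; exact: allup.
move=> /existsNP[dl1 /not_implyP[dl1_gt0 nup]].
exists (F z - e / 2) => u /andP[u1 u2]; apply: reach_closure => dl dl0.
have m0 : 0 < Num.min dl dl1 by rewrite lt_min dl0 dl1_gt0.
case: (up_or_down _ m0) => [upm|downm].
- by exfalso; apply: nup => u' /upm; apply: reach_le; rewrite ge_min lexx orbT.
- by apply: reach_le (downm u _); [rewrite ge_min lexx | apply/andP; split; lra].
Qed.

Variable d : R * R -> R * R -> R.
Hypothesis dxx : forall p, G p -> d p p = 0.
Hypothesis dC : forall p q, G p -> G q -> d p q = d q p.
Hypothesis d_triangle : forall p q r, G p -> G q -> G r -> d p r <= d p q + d q r.
Hypothesis d_topology : forall V : set (R * R),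
  (exists2 U : set (R * R), open U & V = G `&` U) <->
  (V `<=` G /\ forall p, V p ->
     exists2 e : R, 0 < e & forall q, G q -> d p q < e -> V q).
Hypothesis d_complete : forall u : nat -> R * R, (forall n, G (u n)) ->
  (forall e : R, 0 < e -> exists N : nat, forall m n : nat,
     (N <= m)%N -> (N <= n)%N -> d (u m) (u n) < e) ->
  exists2 l, G l & forall e : R, 0 < e -> exists N : nat,
     forall n : nat, (N <= n)%N -> d (u n) l < e.

Lemma graph_ball_d_small {p : R * R} {e : R} : G p -> 0 < e ->
  exists2 rho, 0 < rho & forall q q', G q -> G q' ->
    ball p rho q -> ball p rho q' -> d q q' < e.
Proof.
move=> Gp e0; pose V := [set q | G q /\ d p q < e / 2].
have [U oU VU] : exists2 U, open U & V = G `&` U.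
  apply/d_topology; split => [q []//|q [Gq pq]].
  exists (e / 2 - d p q); first lra.
  by move=> r Gr qr; split => //; have := d_triangle _ _ _ Gp Gq Gr; lra.
have /nbhs_ballP[rho rho0 pU] : nbhs p U.
  apply: open_nbhs_nbhs; split => //.
  have : V p by split => //; rewrite dxx //; lra.
  by rewrite VU => -[].
exists rho => // q q' Gq Gq' /pU Uq /pU Uq'.
have [_ pq] : V q by rewrite VU.
have [_ pq'] : V q' by rewrite VU.
by have := d_triangle _ _ _ Gq Gp Gq'; rewrite (dC q p) //; lra.
Qed.

Lemma d_small_ball {l : R * R} {e : R} : G l -> 0 < e ->
  exists2 e', 0 < e' & forall q, G q -> d l q < e' -> ball l e q.
Proof.
move=> Gl e0.
have [_ /(_ l (conj Gl (ballxx l e0)))[e' e'0 le']] :=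
  proj1 (d_topology (G `&` ball l e)) (ex_intro2 _ _ _ (ball_open l e) erefl).
by exists e' => // q Gq /le'[].
Qed.

Lemma nested_graph_limit (S : nat -> set (R * R)) (u : nat -> R) :
  (forall n, S n.+1 `<=` S n) ->
  (forall n q q', G q -> G q' -> S n.+1 q -> S n.+1 q' -> d q q' < n.+1%:R^-1) ->
  (forall n, S n (u n, F (u n))) ->
  exists2 l, G l & forall e, 0 < e ->
    exists N, forall n, (N <= n)%N -> ball l e (u n, F (u n)).
Proof.
move=> /subset_nonincreasing Smono Ssmall uS.
have [l Gl ul] : exists2 l, G l & forall e, 0 < e ->
    exists N, forall n, (N <= n)%N -> d (u n, F (u n)) l < e.
  apply: d_complete => // e e0; have [N Ne] := invSn_lt e0.
  exists N.+1 => m k Nm Nk; apply: lt_trans Ne.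
  by apply: Ssmall => //; [exact: Smono _ _ Nm _ (uS m) | exact: Smono _ _ Nk _ (uS k)].
exists l => // e e0; have [e' e'0 le'] := d_small_ball Gl e0.
have [N uN] := ul e' e'0; exists N => n Nn.
by apply: le' => //; rewrite dC //; exact: uN.
Qed.

Record square_pair := SquarePair { sp_col : R; sp_lo : R; sp_hi : R; sp_rad : R }.

Definition square (s : square_pair) (b : bool) : set (R * R) :=
  ball (sp_col s, if b then sp_hi s else sp_lo s) (sp_rad s).

Definition adherent (s : square_pair) :=
  0 < sp_rad s /\ forall b, square s b `<=` closure G.

Definition refines (n : nat) (s s' : square_pair) :=
  [/\ 0 < sp_rad s', sp_rad s' <= n.+1%:R^-1,
     forall b, square s' b `<=` square s b &
     forall b q q', G q -> G q' -> square s' b q -> square s' b q' ->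
       d q q' < n.+1%:R^-1].

Lemma adherent_graph_point {s : square_pair} (b : bool) :
  adherent s -> exists x, square s b (x, F x).
Proof.
by move=> [r0 cl]; have /closure_graphP/(_ _ r0) := cl b _ (ballxx _ r0).
Qed.

Lemma refines_adherent {n : nat} {s s' : square_pair} :
  adherent s -> refines n s s' -> adherent s'.
Proof. by move=> [_ cl] [r0 _ sub _]; split => // b p /sub /cl. Qed.

Lemma refine_square_pair (n : nat) (s : square_pair) :
  adherent s -> exists s', refines n s s'.
Proof.
case: s => c a b r adh; have [/= r0 cl] := adh.
pose e : R := n.+1%:R^-1; have e0 : 0 < e by rewrite invr_gt0.
have [x1 /= cx1] := adherent_graph_point false adh.
have [rho1 rho1_0 small1] := graph_ball_d_small (erefl : G (x1, F x1)) e0.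
have x1b : ball (c, b) r (x1, b).
  by move/ball_prodP: cx1 => -[? _]; apply/ball_prodP; rewrite subrr normr0.
have [s1 s1_0 [_ s1a s1b]] := open_common_ball
  (openI (ball_open (c, a) r) (ball_open (x1, F x1) rho1)) (ball_open (c, b) r)
  (conj cx1 (ballxx _ rho1_0)) x1b e0.
have [x2 x1x2] := (closure_graphP _).1 (cl true _ x1b) s1 s1_0.
have [rho2 rho2_0 small2] := graph_ball_d_small (erefl : G (x2, F x2)) e0.
have x2a : ball (x1, F x1) s1 (x2, F x1).
  by move/ball_prodP: x1x2 => -[? _]; apply/ball_prodP; rewrite subrr normr0.
have [s2 s2_0 [s2e s2b s2a]] := open_common_ball
  (openI (ball_open (x1, b) s1) (ball_open (x2, F x2) rho2)) (ball_open (x1, F x1) s1)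
  (conj x1x2 (ballxx _ rho2_0)) x2a e0.
exists (SquarePair x2 (F x1) (F x2) s2); split => //= -[] /=.
- by move=> p /s2b[/s1b].
- by move=> p /s2a /s1a[].
- by move=> q q' Gq Gq' /s2b[_ ?] /s2b[_ ?]; exact: small2.
- by move=> q q' Gq Gq' /s2a /s1a[_ ?] /s2a /s1a[_ ?]; exact: small1.
Qed.

Lemma adherent_square_pair_close (s : square_pair) :
  adherent s -> `|sp_hi s - sp_lo s| <= 2 * sp_rad s.
Proof.
move=> adh.
have [st [st0 refst]] : exists st : nat -> square_pair,
    st 0%N = s /\ forall n, refines n (st n) (st n.+1).
  apply: dependent_choice adh _ => n s' adh'.
  have [s'' ref] := refine_square_pair n s' adh'.
  by exists s'' => //; exact: refines_adherent ref.
have adh_st n : adherent (st n).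
  by elim: n => [|n IH]; [rewrite st0 | exact: refines_adherent IH (refst n)].
have sq_dec b n : square (st n.+1) b `<=` square (st n) b by case: (refst n).
have /choice[pt ptS] : forall bn : bool * nat, exists x, square (st bn.2) bn.1 (x, F x).
  by case=> b n; exact: adherent_graph_point.
have lim b : exists2 l, G l & forall e, 0 < e -> exists N, forall n, (N <= n)%N ->
    ball l e (pt (b, n), F (pt (b, n))).
  apply: (@nested_graph_limit (fun n => square (st n) b) (fun n => pt (b, n))) => // n.
  - by case: (refst n) => _ _ _; apply.
  - exact: ptS (b, n).
have [l0 Gl0 lim0] := lim false.
have [l1 Gl1 lim1] := lim true.
have approx e : 0 < e -> exists x0 x1,
    [/\ ball l0 e (x0, F x0), ball l1 e (x1, F x1), `|x0 - x1| < 2 * e,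
       square s false (x0, F x0) & square s true (x1, F x1)].
  move=> e0; have [N0 h0] := lim0 e e0; have [N1 h1] := lim1 e e0.
  have [M Me] := invSn_lt e0; pose n := maxn (maxn N0 N1) M.
  have rad_lt : sp_rad (st n.+1) < e.
    case: (refst n) => _ rad_le _ _; apply: le_lt_trans rad_le (le_lt_trans _ Me).
    by rewrite lef_pV2 ?posrE // ler_nat ltnS /n leq_maxr.
  have in_s b : square s b (pt (b, n.+1), F (pt (b, n.+1))).
    rewrite -st0; apply: subset_nonincreasing (sq_dec b) _ _ (leq0n _) _ _.
    exact: ptS (b, n.+1).
  exists (pt (false, n.+1)), (pt (true, n.+1)); split => //.
  - by apply: h0; rewrite /n; lia.
  - by apply: h1; rewrite /n; lia.
  have /ball_prodP/= [/ltr_normlP[? ?] _] := ptS (false, n.+1).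
  have /ball_prodP/= [/ltr_normlP[? ?] _] := ptS (true, n.+1).
  by apply/ltr_normlP; split; lra.
(* the two squares of [st n] share a column whose width tends to 0 *)
have l01 : l0.1 = l1.1.
  apply/eqP; rewrite -subr_eq0 -normr_le0; apply/ler_addgt0Pr => e e0; rewrite add0r.
  have [x0 [x1 [/ball_prodP/= [/ltr_normlP[? ?] _] /ball_prodP/= [/ltr_normlP[? ?] _]
    /ltr_normlP[? ?] _ _]]] := approx (e / 4) ltac:(lra).
  by apply/ltW/ltr_normlP; split; lra.
have l02 : l0.2 = l1.2 by rewrite Gl0 Gl1 l01.
apply/ler_addgt0Pr => e e0.
have [x0 [x1 [/ball_prodP/= [_ /ltr_normlP[? ?]] /ball_prodP/= [_ /ltr_normlP[? ?]] _
  /ball_prodP/= [_ /ltr_normlP[? ?]] /ball_prodP/= [_ /ltr_normlP[? ?]]]]] :=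
  approx (e / 2) ltac:(lra).
by apply/ler_normlP; move: l02 => /=; split; lra.
Qed.

Lemma osc_ge_nowhere_dense e : 0 < e -> nowhere_dense (osc_ge e).
Proof.
move=> e0; rewrite /nowhere_dense -(closure_id _).1; last exact: closed_osc_ge.
apply/seteqP; split => // x0 x0E; pose w := e / 4.
(* [unpickle] enumerates the integers [m], hence the grid points [m * w] *)
pose g n : R := (odflt 0 (unpickle n))%:~R * w.
have w0 : 0 < w by rewrite divr_gt0.
pose A n := [set y | forall u, g n <= u <= g n + w -> closure G (y, u)].
have [n [z0 /nbhs_ballP[rho rho0 z0A]]] : exists n, interior (A n) !=set0.
  apply: (@Baire_closed_cover _ _ A (interior (osc_ge e))) => //.
  - by move=> n; apply: closed_vertical_section; exact: closed_closure.
  - exact: open_interior.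
  - by exists x0.
  move=> y /interior_subset/osc_ge_closure_segment[t segt].
  exists (pickle (Num.ceil (t / w))) => //; rewrite /A /g pickleK /= => u /andP[u1 u2].
  have := ceil_ge (t / w); rewrite ler_pdivrMr // => ?.
  have := ceilB1_lt (t / w); rewrite ltr_pdivlMr // intrB mulrBl mul1r => ?.
  have e2w : e / 2 = 2 * w by rewrite /w; lra.
  by apply: segt; apply/andP; split; lra.
pose r := Num.min rho (w / 8).
have r0 : 0 < r by rewrite lt_min rho0 divr_gt0 // divr_gt0.
have [r_rho r_w] : r <= rho /\ r <= w / 8 by rewrite !ge_min !lexx ?orbT.
have /adherent_square_pair_close/= : adherent (SquarePair z0 (g n + r) (g n + w - r) r).
  split => // b [y u] /ball_prodP/= [/ltr_normlP[? ?] uI].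
  have /z0A Ay : ball z0 rho y.
    by rewrite -ball_normE /=; apply/ltr_normlP; split; lra.
  by apply: Ay; move: uI; case: b => /ltr_normlP[? ?]; apply/andP; split; lra.
by move=> /ler_normlP[? ?]; lra.
Qed.

End graph.

Theorem theorem2 (R : realType) (F : R -> R) :
  connected (graph F) ->
  completely_metrizable (R := R) (graph F) ->
  meager [set x : R | ~ {for x, continuous F}].
Proof.
move=> Fconn [d [_ [d0 [dC [d_triangle [d_topology d_complete]]]]]].
have dxx p : graph F p -> d p p = 0 by move=> Gp; exact/(d0 _ _ Gp Gp).
exists (fun k => osc_ge F k.+1%:R^-1); split.
- move=> k; apply: (osc_ge_nowhere_dense _ Fconn _ dxx dC d_triangle d_topology
    d_complete).
  by rewrite invr_gt0.
- by move=> x /not_continuous_osc_ge[k xk]; exists k.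
Qed.
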